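(* Let $n\ge3$, $k\ge0$, let $m\ge2$, and let $C=\{(x_\alpha,y_\alpha):\alpha\in[m]\}$ be a strict alternating cycle in $\mathrm{Inc}(A,B)$ for the crown $S_n^k$. Then $mn\le 2(n+k)$.
   Context: For integers $n\ge3$, $k\ge0$, the crown $S_n^k$ is the poset with ground set $A\cup B$, $A=\{a_1,\dots,a_{n+k}\}$, $B=\{b_1,\dots,b_{n+k}\}$, indices cyclic modulo $n+k$; elements of $A$ are pairwise incomparable, as are elements of $B$, and $a_i$ is incomparable to $b_j$ when $j\in\{i,\dots,i+k\}$ (mod $n+k$), while $a_i<b_j$ otherwise. $\mathrm{Inc}(A,B)$ is the set of pairs $(a,b)\in A\times B$ with $a$ incomparable to $b$. An indexed set $\{(x_\alpha,y_\alpha):\alpha\in[m]\}$ of incomparable pairs is an alternating cycle of size $m$ if $x_\alpha\le y_{\alpha-1}$ for all $\alpha\in[m]$ (subscripts cyclic modulo $m$, so $x_1\le y_m$); it is strict if, for all $\alpha,\beta\in[m]$, $x_\alpha\le y_\beta$ holds if and only if $\beta=\alpha-1$. Here $[m]=\{1,\dots,m\}$. *)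

From mathcomp Require Import all_boot.
Set Implicit Arguments. Unset Strict Implicit. Unset Printing Implicit Defensive.

(* Crown S_n^k: ground set A ∪ B, A = {a_i}, B = {b_j}, indices i, j in
   'I_(n+k) (0-based, cyclic mod n+k). *)
Inductive crown_elt (N : nat) : Type :=
| Ael of 'I_N
| Bel of 'I_N.

(* a_i is incomparable to b_j iff j ∈ {i, ..., i+k} (mod n+k),
   i.e. (j - i) mod (n+k) <= k. *)
Definition crown_inc_AB (n k : nat) (i j : 'I_(n + k)) : bool :=
  ((j + (n + k) - i) %% (n + k) <= k).

Arguments crown_inc_AB : clear implicits.

Definition crown_le (n k : nat) (x y : crown_elt (n + k)) : bool :=
  match x, y with
  | Ael i, Ael i' => i == i'
  | Bel j, Bel j' => j == j'
  | Ael i, Bel j => ~~ crown_inc_AB n k i j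
  | Bel _, Ael _ => false
  end.

Arguments crown_le : clear implicits.

Definition crown_incomparable (n k : nat) (x y : crown_elt (n + k)) : Prop :=
  ~~ crown_le n k x y /\ ~~ crown_le n k y x.

Arguments crown_incomparable : clear implicits.

Definition in_IncAB (n k : nat) (p : crown_elt (n + k) * crown_elt (n + k)) : Prop :=
  (exists i, p.1 = Ael i) /\ (exists j, p.2 = Bel j) /\ crown_incomparable n k p.1 p.2.

Arguments in_IncAB : clear implicits.

Definition cpred (m : nat) (a : 'I_m) : nat := (a + m - 1) %% m.

(* An indexed family C : 'I_m -> pairs is a strict alternating cycle of
   size m: x_a <= y_b iff b = a - 1 (mod m) (this includes the alternating
   condition x_a <= y_(a-1)), together with all pairs being incomparable. *)
Definition strict_alternating_cycle (n k m : nat)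
    (C : 'I_m -> crown_elt (n + k) * crown_elt (n + k)) : Prop :=
  (forall a, crown_incomparable n k (C a).1 (C a).2) /\
  (forall a b : 'I_m, crown_le n k (C a).1 (C b).2 <-> (b : nat) = cpred a).
Arguments strict_alternating_cycle : clear implicits.

From mathcomp Require Import all_boot.
From mathcomp Require Import zify.

Set Implicit Arguments.
Unset Strict Implicit.
Unset Printing Implicit Defensive.

(* Put N := n + k and read the indices of A and B on the cycle Z_N.  The
   elements of B above a_i form the arc U_i of the N - k - 1 = n - 1 points
   at offset more than k from i.  Strictness says that b_(j_b) lies in
   U_(i_a) exactly when a is the successor of b, so the j_b are distinct and
   each arc contains exactly one of them.  Since an arc containing a point x
   is an initial plus a final segment in the cyclic order starting at x, a
   point x outside {j_b} lies only in the arcs whose j-point is the nearest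
   one to x on either side; hence every point of Z_N is covered at most
   twice by the arcs and the points j_b together, and double counting gives
   m (n - 1) + m <= 2 N. *)

Lemma card_ord_gt N k : #|[pred t : 'I_N | k < t]| = N - k.+1.
Proof.
rewrite -sum1_card -[RHS]muln1 -sum_nat_const_nat big_geq_mkord.
by apply: eq_bigl.
Qed.

Lemma sum_card_rel (T1 T2 : finType) (R : T1 -> T2 -> bool) :
  \sum_(x : T2) #|[pred a | R a x]| = \sum_(a : T1) #|[pred x | R a x]|.
Proof.
under eq_bigr do rewrite -sum1_card big_mkcond /=.
under [RHS]eq_bigr do rewrite -sum1_card big_mkcond /=.
exact: exchange_big.
Qed.

Lemma cpredE m (a : 'I_m) : cpred a = ord_pred a.
Proof. by rewrite /cpred subn1. Qed.

Section CyclicOffset.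

Variable N : nat.

Definition coffset (x y : 'I_N) : nat := (y + N - x) %% N.

Lemma coffset_lt x y : coffset x y < N.
Proof. by rewrite ltn_pmod // (leq_ltn_trans _ (ltn_ord x)). Qed.

Lemma coffset_inj x : injective (coffset x).
Proof.
have back y : (coffset x y + x) %% N = y.
  rewrite modnDml subnK ?modnDr ?modn_small //.
  by have := ltn_ord x; lia.
by move=> y y' eq_off; apply: val_inj; rewrite /= -back eq_off back.
Qed.

Lemma coffsetD x y z : coffset z y = (coffset x y + coffset z x) %% N.
Proof.
rewrite /coffset modnDm.
have -> : y + N - x + (x + N - z) = (y + N - z) + N.
  by have := ltn_ord x; have := ltn_ord z; lia.
by rewrite modnDr.
Qed.

Lemma card_coffset_gt k x : #|[pred y | k < coffset x y]| = N - k.+1.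
Proof.
pose shift y : 'I_N := Ordinal (coffset_lt x y).
have shift_inj : injective shift.
  by move=> y y' /(congr1 val) /coffset_inj.
rewrite -card_ord_gt -[in RHS]cardsE -(card_preimset _ shift_inj).
by apply: eq_card => y; rewrite !inE.
Qed.

Lemma coffset_far_split k z x y : k < coffset z x ->
  (k < coffset z y) = (coffset x y + coffset z x < N)
                      || (N + k < coffset x y + coffset z x).
Proof.
move=> far_x; have := coffset_lt x y; have := coffset_lt z x.
rewrite (coffsetD x y z); set d := coffset x y; set e := coffset z x => e_lt d_lt.
have [small | large] := ltnP (d + e) N.
  by rewrite modn_small //= (leq_trans far_x (leq_addl _ _)).
rewrite -(subnK large) modnDr modn_small /=; lia.
Qed.

Lemma coffset_far_between k z x y y1 y2 :
  k < coffset z x -> k < coffset z y ->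
  coffset x y1 <= coffset x y <= coffset x y2 ->
  (k < coffset z y1) || (k < coffset z y2).
Proof.
move=> far_x; rewrite !(coffset_far_split _ far_x) => far_y /andP[le1 le2].
by case/orP: far_y => [small | large]; apply/orP; [left | right];
  apply/orP; [left | right]; lia.
Qed.

End CyclicOffset.

Section StrictArcCycle.

Variables (N k m : nat) (i j : 'I_m -> 'I_N).
Hypothesis far_iff_pred :
  forall a b, (k < coffset (i a) (j b)) = (b == ord_pred a).

Lemma far_ordS b : k < coffset (i (ordS b)) (j b).
Proof. by rewrite far_iff_pred ordSK. Qed.

Lemma far_eq_ordS a b : k < coffset (i a) (j b) -> a = ordS b.
Proof. by rewrite far_iff_pred => /eqP ->; rewrite ord_predK. Qed.

Lemma strict_arc_inj : injective j.
Proof.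
move=> b b' eq_j; have := far_ordS b.
by rewrite eq_j far_iff_pred ordSK => /eqP.
Qed.

Lemma card_far_le2 x : #|[pred a | k < coffset (i a) x]| <= 2.
Proof.
have [a0 _ | no_arc] := pickP [pred a | k < coffset (i a) x]; last first.
  by rewrite (eq_card0 no_arc).
have [bR _ nearest] := arg_minnP (fun b => coffset x (j b)) (isT : xpredT (ord_pred a0)).
have [bL _ furthest] := arg_maxnP (fun b => coffset x (j b)) (isT : xpredT (ord_pred a0)).
apply: (@leq_trans #|[set ordS bR; ordS bL]|); last by rewrite cards2 ltnS leq_b1.
apply: subset_leq_card; apply/subsetP => a far_x; rewrite !inE.
have far_pred : k < coffset (i a) (j (ord_pred a)) by rewrite far_iff_pred.
have between : coffset x (j bR) <= coffset x (j (ord_pred a)) <= coffset x (j bL).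
  by apply/andP; split; [apply: nearest | apply: furthest].
by case/orP: (coffset_far_between far_x far_pred between) => /far_eq_ordS ->;
  rewrite eqxx ?orbT.
Qed.

Lemma cover_le2 x :
  #|[pred a | k < coffset (i a) x]| + #|[pred b | j b == x]| <= 2.
Proof.
have [/codomP [b ->] | not_point] := boolP (x \in codom j); last first.
  rewrite (@eq_card0 _ [pred b | j b == x]) ?addn0 ?card_far_le2 // => b.
  by apply: contraNF not_point => /eqP <-; exact: codom_f.
apply: (@leq_add _ _ 1 1); apply/card_le1_eqP.
  by move=> a a' /far_eq_ordS -> /far_eq_ordS ->.
by move=> b1 b2 /eqP eq1 /eqP eq2; apply: strict_arc_inj; rewrite eq1 eq2.
Qed.

Lemma strict_arc_cycle_bound : m * (N - k) <= 2 * N.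
Proof.
have count_arcs : \sum_x #|[pred a | k < coffset (i a) x]| = m * (N - k.+1).
  rewrite sum_card_rel (eq_bigr _ (fun a _ => card_coffset_gt k (i a))).
  by rewrite sum_nat_const card_ord.
have count_points : \sum_x #|[pred b | j b == x]| = m.
  rewrite sum_card_rel (eq_bigr (fun _ => 1)) => [|b _]; last first.
    by rewrite -(card1 (j b)); apply: eq_card => x; rewrite !inE eq_sym.
  by rewrite sum_nat_const card_ord muln1.
have : \sum_x (#|[pred a | k < coffset (i a) x]| + #|[pred b | j b == x]|)
       <= \sum_(x : 'I_N) 2 by apply: leq_sum => x _; exact: cover_le2.
rewrite big_split /= count_arcs count_points sum_nat_const card_ord [N * 2]mulnC.
have [k_lt | N_le] := ltnP k N; last by rewrite (eqP N_le) muln0.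
by rewrite -mulnSr subnSK.
Qed.

End StrictArcCycle.

Definition crown_index N (x : crown_elt N) : 'I_N :=
  match x with Ael t | Bel t => t end.

Lemma crown_le_AB n k (x y : 'I_(n + k)) :
  crown_le n k (Ael x) (Bel y) = (k < coffset x y).
Proof. by rewrite /= /crown_inc_AB ltnNge. Qed.

Theorem lemma4p2 (n k m : nat) (C : 'I_m -> crown_elt (n + k) * crown_elt (n + k)) :
  3 <= n -> 2 <= m ->
  (forall a, in_IncAB n k (C a)) ->
  strict_alternating_cycle n k m C ->
  m * n <= 2 * (n + k).
Proof.
(* The bound holds for every n and m. *)
move=> _ _ in_inc [_ strict].
pose i a := crown_index (C a).1; pose j b := crown_index (C b).2.
have far_iff_pred a b : (k < coffset (i a) (j b)) = (b == ord_pred a).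
  have [[x Ex] _] := in_inc a; have [_ [[y Ey] _]] := in_inc b.
  rewrite /i /j Ex Ey /= -crown_le_AB -Ex -Ey.
  apply/idP/eqP => [/strict | ->]; last by apply/strict; rewrite cpredE.
  by rewrite cpredE => /val_inj.
by have := strict_arc_cycle_bound far_iff_pred; rewrite addnK.
Qed.
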